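(* Let $(L,\le,(\sqsubseteq_\alpha)_{\alpha<\kappa})$ be a model of Axioms 1–4. Let $\alpha\le\kappa$, let $(x_\beta)_{\beta<\alpha}$ be a partial compatible sequence, and let $x=\bigvee_{\beta<\alpha}x_\beta$. If $z\in L$ satisfies $x_\beta\sqsubseteq_\beta z$ for all $\beta<\alpha$, then $x\sqsubseteq z$.
   Context: Setting (model of Axioms 1–4). Let $(L,\le)$ be a complete lattice with join operation $\bigvee$ and least element $\perp$. Let $\kappa>0$ be an ordinal, and for each ordinal $\alpha<\kappa$ let $\sqsubseteq_\alpha$ be a preorder on $L$. Derived relations: - $x=_\alpha y$ means $x\sqsubseteq_\alpha y$ and $y\sqsubseteq_\alpha x$. - $x\sqsubset_\alpha y$ means $x\sqsubseteq_\alpha y$ and not $x=_\alpha y$. - $\sqsubset=\bigcup_{\alpha<\kappa}\sqsubset_\alpha$. - $x\sqsubseteq y$ means $x\sqsubset y$ or $x=y$. Derived sets, for $x\in L$ and $\alpha<\kappa$: - $(x]_\alpha=\{y\in L:\forall\beta<\alpha,\ x=_\beta y\}$. - $[x]_\alpha=\{y\in L: x=_\alpha y\}$. For a set $X$, $X\sqsubseteq_\alpha y$ means $x\sqsubseteq_\alpha y$ for all $x\in X$. The structure is a model of Axioms 1–4 if: - (A1) for all $\alpha<\beta<\kappa$, $x\sqsubseteq_\beta y$ implies $x=_\alpha y$; - (A2) $\bigcap_{\alpha<\kappa}=_\alpha$ is the identity relation on $L$; - (A3) for every $x\in L$, every $\alpha<\kappa$ and every $X\subseteq(x]_\alpha$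 there is $y\in(x]_\alpha$ with $X\sqsubseteq_\alpha y$ such that for all $z\in(x]_\alpha$ with $X\sqsubseteq_\alpha z$ we have $y\sqsubseteq_\alpha z$ and $y\le z$; - (A4) for every nonempty $X\subseteq L$, every $\alpha<\kappa$ and every $y\in L$, if $y=_\alpha x$ for all $x\in X$ then $y=_\alpha\bigvee X$. For an ordinal $\alpha\le\kappa$, a sequence $(x_\beta)_{\beta<\alpha}$ is a partial compatible sequence if each $x_\beta$ is the $\le$-least element of $[x_\beta]_\beta$ and $x_\beta=_\beta x_\gamma$ for all $\beta<\gamma<\alpha$. *)

From Stdlib Require Import Classical.

(* Ordinals below kappa are modelled by a nonempty type [I] with a strict
   well-order [lt] (any well-order is order-isomorphic to an ordinal). *)
Definition strict_well_order {I : Type} (lt : I -> I -> Prop) : Prop :=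
  (forall a, ~ lt a a) /\
  (forall a b c, lt a b -> lt b c -> lt a c) /\
  (forall a b, lt a b \/ a = b \/ lt b a) /\
  well_founded lt.

(* An ordinal alpha <= kappa: [Some a] is the ordinal a < kappa,
   [None] is kappa itself.  [below lt b alpha] means b < alpha. *)
Definition below {I : Type} (lt : I -> I -> Prop) (b : I) (alpha : option I) : Prop :=
  match alpha with
  | None => True
  | Some a => lt b a
  end.

Definition complete_lattice {L : Type} (le : L -> L -> Prop)
  (join : (L -> Prop) -> L) : Prop :=
  (forall x, le x x) /\
  (forall x y z, le x y -> le y z -> le x z) /\
  (forall x y, le x y -> le y x -> x = y) /\
  (forall X : L -> Prop, (forall w, X w -> le w (join X)) /\
     (forall u, (forall w, X w -> le w u) -> le (join X) u)).

Definition preorder {L : Type} (r : L -> L -> Prop) : Prop :=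
  (forall x, r x x) /\ (forall x y z, r x y -> r y z -> r x z).

Section Derived.
Context {I L : Type} (lt : I -> I -> Prop) (sq : I -> L -> L -> Prop).

Definition eqa (a : I) (x y : L) : Prop := sq a x y /\ sq a y x.
Definition sqlta (a : I) (x y : L) : Prop := sq a x y /\ ~ eqa a x y.
Definition sqlt (x y : L) : Prop := exists a, sqlta a x y.
Definition sqle (x y : L) : Prop := sqlt x y \/ x = y.
Definition downset (x : L) (a : I) : L -> Prop :=
  fun y => forall b, lt b a -> eqa b x y.
Definition cls (x : L) (a : I) : L -> Prop := fun y => eqa a x y.

End Derived.

Definition model_A1_4 {I L : Type} (lt : I -> I -> Prop)
  (le : L -> L -> Prop) (join : (L -> Prop) -> L)
  (sq : I -> L -> L -> Prop) : Prop :=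
  (forall a b, lt a b -> forall x y, sq b x y -> eqa sq a x y) /\
  (forall x y, (forall a, eqa sq a x y) -> x = y) /\
  (forall (x : L) (a : I) (X : L -> Prop),
     (forall w, X w -> downset lt sq x a w) ->
     exists y, downset lt sq x a y /\ (forall w, X w -> sq a w y) /\
       (forall z, downset lt sq x a z -> (forall w, X w -> sq a w z) ->
          sq a y z /\ le y z)) /\
  (forall (X : L -> Prop), (exists w, X w) -> forall a y,
     (forall w, X w -> eqa sq a y w) -> eqa sq a y (join X)).

Definition partial_compatible {I L : Type} (lt : I -> I -> Prop)
  (le : L -> L -> Prop) (sq : I -> L -> L -> Prop)
  (alpha : option I) (xs : I -> L) : Prop :=
  (forall b, below lt b alpha ->
     cls sq (xs b) b (xs b) /\ (forall y, cls sq (xs b) b y -> le (xs b) y)) /\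
  (forall b c, lt b c -> below lt c alpha -> eqa sq b (xs b) (xs c)).

From Stdlib Require Import Classical.

(* First, x agrees with each of its terms at their own level: x =_b x_b.
   Indeed the sequence is <=-increasing (x_c is <=-least in its class and
   x_c =_c x_d for c < d), so x is also the join of the tail (x_c)_{b<=c<alpha},
   all of whose members are =_b x_b; Axiom 4 then gives x_b =_b x.
   Second, if x <> z, Axiom 2 and well-foundedness give a least level m with
   not x =_m z, so that z lies in (x]_m.  If m < alpha then
   x =_m x_m ⊑_m z, hence x ⊏_m z.  If m >= alpha, then x is the least element
   of (x]_m provided by Axiom 3 (with X empty): that least element y is <= x,
   and every x_b lies below y because y =_b x =_b x_b; hence x ⊑_m z and
   again x ⊏_m z. *)

Lemma wf_least {I : Type} (lt : I -> I -> Prop) (Hwf : well_founded lt)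
  (P : I -> Prop) : forall a, P a -> exists m, P m /\ forall b, lt b m -> ~ P b.
Proof.
  intro a. induction a as [a IH] using (well_founded_ind Hwf). intro Pa.
  destruct (classic (exists b, lt b a /\ P b)) as [[b [Hb Pb]]|Hn].
  - exact (IH b Hb Pb).
  - exists a; split; [exact Pa|]. intros b Hb Pb; apply Hn; eauto.
Qed.

Section LevelEquality.
Context {I L : Type} (sq : I -> L -> L -> Prop).
Hypothesis sq_pre : forall a, preorder (sq a).

Lemma eqa_refl (a : I) (u : L) : eqa sq a u u.
Proof. split; apply (proj1 (sq_pre a)). Qed.

Lemma eqa_trans (a : I) (u v w : L) :
  eqa sq a u v -> eqa sq a v w -> eqa sq a u w.
Proof.
  intros [h1 h2] [h3 h4]; split; eapply (proj2 (sq_pre a)); eauto.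
Qed.
End LevelEquality.

Section Ordinals.
Context {I : Type} (lt : I -> I -> Prop).
Hypothesis lt_trans : forall a b c, lt a b -> lt b c -> lt a c.
Hypothesis lt_total : forall a b, lt a b \/ a = b \/ lt b a.

Lemma below_down (alpha : option I) (c d : I) :
  lt c d -> below lt d alpha -> below lt c alpha.
Proof. destruct alpha; simpl; eauto. Qed.

Lemma below_lt_of_not_below (alpha : option I) (m b : I) :
  ~ below lt m alpha -> below lt b alpha -> lt b m.
Proof.
  destruct alpha as [a|]; simpl; [|tauto].
  intros Hm Hb. destruct (lt_total b m) as [H|[H|H]]; auto.
  - subst; contradiction.
  - exfalso; eauto.
Qed.
End Ordinals.

Section CompatibleJoin.
Context {I L : Type} (lt : I -> I -> Prop) (le : L -> L -> Prop)
  (join : (L -> Prop) -> L) (sq : I -> L -> L -> Prop).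
Hypothesis lt_irrefl : forall a, ~ lt a a.
Hypothesis lt_trans : forall a b c, lt a b -> lt b c -> lt a c.
Hypothesis lt_total : forall a b, lt a b \/ a = b \/ lt b a.
Hypothesis le_trans : forall x y z, le x y -> le y z -> le x z.
Hypothesis le_antisym : forall x y, le x y -> le y x -> x = y.
Hypothesis join_ub : forall X w, X w -> le w (join X).
Hypothesis join_least : forall X u, (forall w, X w -> le w u) -> le (join X) u.
Hypothesis sq_pre : forall a, preorder (sq a).
Hypothesis axiom3 : forall (x : L) (a : I) (X : L -> Prop),
  (forall w, X w -> downset lt sq x a w) ->
  exists y, downset lt sq x a y /\ (forall w, X w -> sq a w y) /\
    (forall z, downset lt sq x a z -> (forall w, X w -> sq a w z) ->
       sq a y z /\ le y z).
Hypothesis axiom4 : forall (X : L -> Prop), (exists w, X w) -> forall a y,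
  (forall w, X w -> eqa sq a y w) -> eqa sq a y (join X).

Variables (alpha : option I) (xs : I -> L).
Hypothesis xs_least :
  forall b, below lt b alpha -> forall y, eqa sq b (xs b) y -> le (xs b) y.
Hypothesis xs_compat :
  forall b c, lt b c -> below lt c alpha -> eqa sq b (xs b) (xs c).

Let terms : L -> Prop := fun w => exists b, below lt b alpha /\ w = xs b.

Lemma compatible_increasing (c d : I) :
  lt c d -> below lt d alpha -> le (xs c) (xs d).
Proof.
  intros Hcd Hd. apply (xs_least c (below_down lt lt_trans alpha c d Hcd Hd)).
  apply xs_compat; auto.
Qed.

(* Being increasing, the sequence has the same join as any of its tails. *)
Lemma join_tail (b : I) : below lt b alpha ->
  join terms = join (fun w => exists c, below lt c alpha /\ ~ lt c b /\ w = xs c).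
Proof.
  intro Hb. apply le_antisym; apply join_least.
  - intros w [c [Hc ->]]. destruct (classic (lt c b)) as [Hcb|Hcb].
    + apply le_trans with (xs b); [exact (compatible_increasing c b Hcb Hb)|].
      apply join_ub. exists b; repeat split; auto using lt_irrefl.
    + apply join_ub. exists c; auto.
  - intros w [c [Hc [_ ->]]]. apply join_ub. exists c; auto.
Qed.

(* The join agrees with each term at that term's level (Axiom 4 on a tail). *)
Lemma join_agrees (b : I) : below lt b alpha -> eqa sq b (xs b) (join terms).
Proof.
  intro Hb. rewrite (join_tail b Hb). apply axiom4.
  - exists (xs b), b; repeat split; auto using lt_irrefl.
  - intros w [c [Hc [Hcb ->]]]. destruct (lt_total b c) as [H|[H|H]].
    + apply xs_compat; auto.
    + subst; exact (eqa_refl sq sq_pre c (xs c)).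
    + contradiction.
Qed.

(* At a level m >= alpha, the join is the ⊑_m-least element of its own
   downset (x]_m: it coincides with the least element given by Axiom 3. *)
Lemma join_least_in_downset (m : I) :
  (forall b, below lt b alpha -> lt b m) ->
  forall z, downset lt sq (join terms) m z -> sq m (join terms) z.
Proof.
  intros Hm z Hz.
  destruct (axiom3 (join terms) m (fun _ => False) (fun w F => False_ind _ F))
    as [y [Hy_down [_ Hy_least]]].
  assert (Hyx : y = join terms).
  { apply le_antisym.
    - apply (Hy_least (join terms) (fun b _ => eqa_refl sq sq_pre b _)
               (fun w F => False_ind _ F)).
    - apply join_least. intros w [b [Hb ->]]. apply (xs_least b Hb).
      apply eqa_trans with (join terms); [exact sq_pre|exact (join_agrees b Hb)|].
      exact (Hy_down b (Hm b Hb)). }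
  rewrite <- Hyx. exact (proj1 (Hy_least z Hz (fun w F => False_ind _ F))).
Qed.
End CompatibleJoin.

Lemma first_disagreement {I L : Type} (lt : I -> I -> Prop)
  (sq : I -> L -> L -> Prop) (Hwf : well_founded lt)
  (axiom2 : forall x y, (forall a, eqa sq a x y) -> x = y) (x z : L) :
  x <> z -> exists m, ~ eqa sq m x z /\ downset lt sq x m z.
Proof.
  intro Hneq.
  assert (Hex : exists a, ~ eqa sq a x z).
  { apply NNPP; intro Hn. apply Hneq, axiom2. intro a.
    apply NNPP; intro Ha; apply Hn; eauto. }
  destruct Hex as [a Ha].
  destruct (wf_least lt Hwf (fun a => ~ eqa sq a x z) a Ha) as [m [Hm Hbelow]].
  exists m; split; [exact Hm|]. intros b Hb. apply NNPP, Hbelow, Hb.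
Qed.

Theorem mainTheorem12 (I L : Type) (lt : I -> I -> Prop)
  (le : L -> L -> Prop) (join : (L -> Prop) -> L)
  (sq : I -> L -> L -> Prop)
  (Hwo : strict_well_order lt) (Hne : inhabited I)
  (Hlat : complete_lattice le join)
  (Hpre : forall a, preorder (sq a))
  (Hmodel : model_A1_4 lt le join sq)
  (alpha : option I) (xs : I -> L)
  (Hxs : partial_compatible lt le sq alpha xs)
  (z : L)
  (Hz : forall b, below lt b alpha -> sq b (xs b) z) :
  sqle sq (join (fun w => exists b, below lt b alpha /\ w = xs b)) z.
Proof.
  destruct Hwo as [Hirr [Htr [Htot Hwf]]].
  destruct Hlat as [_ [Ltr [Lanti Ljoin]]].
  destruct Hmodel as [_ [A2 [A3 A4]]].
  destruct Hxs as [Hmin Hcomp].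
  set (x := join (fun w => exists b, below lt b alpha /\ w = xs b)).
  destruct (classic (x = z)) as [Heq|Hneq]; [right; exact Heq|].
  destruct (first_disagreement lt sq Hwf A2 x z Hneq) as [m [Hm Hdown]].
  left; exists m; split; [|exact Hm].
  destruct (classic (below lt m alpha)) as [Hb|Hb].
  - (* m < alpha: x =_m x_m ⊑_m z *)
    apply (proj2 (Hpre m)) with (xs m); [|exact (Hz m Hb)].
    apply (join_agrees lt le join sq Hirr Htr Htot Ltr Lanti
             (fun X w => proj1 (Ljoin X) w) (fun X => proj2 (Ljoin X))
             Hpre A4 alpha xs (fun b Hb => proj2 (Hmin b Hb)) Hcomp m Hb).
  - (* m >= alpha: x is ⊑_m-least in (x]_m, which contains z *)
    apply (join_least_in_downset lt le join sq Hirr Htr Htot Ltr Lanti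
             (fun X w => proj1 (Ljoin X) w) (fun X => proj2 (Ljoin X))
             Hpre A3 A4 alpha xs (fun b Hb => proj2 (Hmin b Hb)) Hcomp m);
      [|exact Hdown].
    intros b Hbα. exact (below_lt_of_not_below lt Htr Htot alpha m b Hb Hbα).
Qed.
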